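(* Let $f:\mathbb{R}^{2}\to\mathbb{R}$ be smooth and normal, and for $k_{1}\neq0$, $k_{2}\neq0$, $x,y\in\mathbb{R}$ let $F(k_{1},y)=\lim_{r\to\infty}\int_{-r}^{r}f(x,y)e^{-ik_{1}x}\,dx$ and $G(x,k_{2})=\lim_{r\to\infty}\int_{-r}^{r}f(x,y)e^{-ik_{2}y}\,dy$. Then for $k_{1}\neq0$, $k_{2}\neq0$ the integrals $F(k_{1},k_{2})=\int_{-\infty}^{\infty}F(k_{1},y)e^{-ik_{2}y}\,dy$ and $G(k_{1},k_{2})=\int_{-\infty}^{\infty}G(x,k_{2})e^{-ik_{1}x}\,dx$ are well defined, and $F(k_{1},k_{2})=G(k_{1},k_{2})=\lim_{m\to\infty,n\to\infty}\int_{-m}^{m}\int_{-n}^{n}f(x,y)e^{-ik_{1}x}e^{-ik_{2}y}\,dx\,dy.$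
   Context: One-variable notions: a smooth $g:\mathbb{R}\setminus V\to\mathbb{R}$, $V\subset\mathbb{R}$ bounded closed, is analytic at infinity if there exist $\epsilon_{1},\epsilon_{2}>0$ such that $g(1/t)=\sum_{n\geq1}a_{n}t^{n}$ for $0<t<\epsilon_{1}$ and $g(1/t)=\sum_{n\geq1}b_{n}t^{n}$ for $-\epsilon_{2}<t<0$, with real coefficients and both power series absolutely convergent on the respective intervals. Two-variable notions: for smooth $f:\mathbb{R}^{2}\to\mathbb{R}$, $f$ is of very moderate decrease if there is $C>0$ with $|f(x,y)|\leq\frac{C}{|(x,y)|}$ for $|(x,y)|>1$, and of moderate decrease if $|f(x,y)|\leq\frac{C}{|(x,y)|^{2}}$ for $|(x,y)|>1$. For fixed $x$ write $f_{x}(y)=f(x,y)$ and for fixed $y$ write $f_{y}(x)=f(x,y)$. $f$ is normal if: (i) for every $x$, $f_{x}$ is analytic at infinity; (ii) for every $y$, $f_{y}$ is analytic at infinity; (iii) $f$ is of very moderate decrease; (iv) $\frac{\partial f}{\partial x}$ and $\frac{\partial f}{\partial y}$ are of moderate decrease; (v) there is a uniform bound on the number of zeros of $f_{x},(f_{x})',(f_{x})''$ and of $f_{y},(f_{y})',(f_{y})''$. *)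

From Stdlib Require Import Reals List.
From Coquelicot Require Import Coquelicot.
Import ListNotations.
Open Scope R_scope.

Definition cexpi (t : R) : C := (cos t, sin t).

(** Complex-valued Riemann integrals, componentwise (Coquelicot's [C] is not a
    normed R-module, so we integrate real and imaginary parts separately). *)
Definition RInt_C (g : R -> C) (a b : R) : C :=
  (RInt (fun t => Re (g t)) a b, RInt (fun t => Im (g t)) a b).

Definition is_RInt_gen_C (g : R -> C) (l : C) : Prop :=
  is_RInt_gen (fun t => Re (g t)) (Rbar_locally m_infty) (Rbar_locally p_infty) (Re l) /\
  is_RInt_gen (fun t => Im (g t)) (Rbar_locally m_infty) (Rbar_locally p_infty) (Im l).

Definition dx (f : R -> R -> R) : R -> R -> R := fun x y => Derive (fun t => f t y) x.
Definition dy (f : R -> R -> R) : R -> R -> R := fun x y => Derive (fun t => f x t) y.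

Fixpoint Ck (n : nat) (f : R -> R -> R) : Prop :=
  match n with
  | O => forall p : R * R, continuous (fun q : R * R => f (fst q) (snd q)) p
  | S m => (forall x y, ex_derive (fun t => f t y) x /\ ex_derive (fun t => f x t) y)
           /\ Ck m f /\ Ck m (dx f) /\ Ck m (dy f)
  end.

Definition smooth2 (f : R -> R -> R) : Prop := forall n, Ck n f.

Definition analytic_at_infinity (g : R -> R) : Prop :=
  exists e1 e2 : R, 0 < e1 /\ 0 < e2 /\
  exists a b : nat -> R,
    (forall t, 0 < t < e1 ->
       ex_series (fun n => Rabs (a n * t ^ (S n))) /\
       is_series (fun n => a n * t ^ (S n)) (g (/ t))) /\
    (forall t, - e2 < t < 0 ->
       ex_series (fun n => Rabs (b n * t ^ (S n))) /\
       is_series (fun n => b n * t ^ (S n)) (g (/ t))).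

Definition norm2 (x y : R) : R := sqrt (x ^ 2 + y ^ 2).

Definition very_moderate_decrease (f : R -> R -> R) : Prop :=
  exists C : R, 0 < C /\ forall x y, 1 < norm2 x y -> Rabs (f x y) <= C / norm2 x y.

Definition moderate_decrease (f : R -> R -> R) : Prop :=
  exists C : R, 0 < C /\ forall x y, 1 < norm2 x y -> Rabs (f x y) <= C / (norm2 x y) ^ 2.

Definition at_most_zeros (g : R -> R) (N : nat) : Prop :=
  forall l : list R, NoDup l -> (forall z, In z l -> g z = 0) -> (length l <= N)%nat.

Definition normal (f : R -> R -> R) : Prop :=
  (forall x, analytic_at_infinity (fun y => f x y)) /\
  (forall y, analytic_at_infinity (fun x => f x y)) /\
  very_moderate_decrease f /\
  moderate_decrease (dx f) /\ moderate_decrease (dy f) /\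
  (exists N : nat,
     (forall x, at_most_zeros (fun y => f x y) N /\
                at_most_zeros (Derive (fun y => f x y)) N /\
                at_most_zeros (Derive (Derive (fun y => f x y))) N) /\
     (forall y, at_most_zeros (fun x => f x y) N /\
                at_most_zeros (Derive (fun x => f x y)) N /\
                at_most_zeros (Derive (Derive (fun x => f x y))) N)).

From Stdlib Require Import Reals Lra Lia Psatz List Classical.
From Coquelicot Require Import Coquelicot.
Open Scope R_scope.

(* Split e^{-ikx} into cosine and sine, so that everything reduces to real weights w1(x), w2(y)
   with bounded primitives.  Integrating by parts in x, the partial transform
   \int_{-r}^{r} f(x,y) w1(x) dx equals boundary terms of size O(1/r) minus \int f_x W1.  If g'
   has at most N zeros then g is monotone on at most N+1 pieces, so \int g V' is bounded by a
   constant times sup|g| sup|V|.  Applied to g = f_x (f_xx has few zeros) together with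
   |f_x| <= C/|(x,y)|^2, this shows that the partial transforms converge to Phi(y) at rate
   O(1/(n^2+y^2)), uniformly in y.  Hence Phi is continuous and O(1/y^2), \int Phi w2 converges,
   and the same estimate in y (on f(+-n, .), whose y-derivative has few zeros) puts the square
   integral over [-n,n]x[-m,m] within O(1/n) of \int_{-m}^{m} Phi w2.  Running the argument with
   x and y exchanged and applying Fubini on squares shows that both iterated transforms equal
   the double limit. *)

Ltac continuity_R :=
  match goal with
  | |- continuous (fun _ => ?c) _ => apply continuous_const
  | |- continuous (fun y => @?u y * @?v y) _ =>
      apply (continuous_mult (K := R_AbsRing) u v); continuity_R
  | |- continuous (fun y => @?u y + @?v y) _ =>
      apply (continuous_plus (V := R_NormedModule) u v); continuity_R
  | |- continuous (fun y => @?u y - @?v y) _ =>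
      apply (continuous_minus (V := R_NormedModule) u v); continuity_R
  | |- continuous (fun y => - @?u y) _ =>
      apply (continuous_opp (V := R_NormedModule) u); continuity_R
  | |- continuous (fun y => Rabs (@?u y)) _ =>
      apply (continuous_comp u Rabs); [continuity_R | apply (continuous_abs (K := R_AbsRing))]
  | _ => solve [auto]
  end.

Lemma ex_RInt_continuous_R (f : R -> R) a b : (forall x, continuous f x) -> ex_RInt f a b.
Proof. intros Hf. apply (ex_RInt_continuous (V := R_CompleteNormedModule)); auto. Qed.

Lemma is_derive_continuous_R (f df : R -> R) x : is_derive f x (df x) -> continuous f x.
Proof.
  intros Hf. apply (ex_derive_continuous (K := R_AbsRing) (V := R_NormedModule)). now exists (df x).
Qed.

Lemma RInt_plus_R (f g : R -> R) a b :
  ex_RInt f a b -> ex_RInt g a b -> RInt (fun x => f x + g x) a b = RInt f a b + RInt g a b.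
Proof. exact (RInt_plus (V := R_CompleteNormedModule) f g a b). Qed.

Lemma RInt_minus_R (f g : R -> R) a b :
  ex_RInt f a b -> ex_RInt g a b -> RInt (fun x => f x - g x) a b = RInt f a b - RInt g a b.
Proof. exact (RInt_minus (V := R_CompleteNormedModule) f g a b). Qed.

Lemma RInt_scal_R (f : R -> R) k a b : ex_RInt f a b -> RInt (fun x => k * f x) a b = k * RInt f a b.
Proof. exact (RInt_scal (V := R_CompleteNormedModule) f a b k). Qed.

Lemma RInt_Chasles_R (f : R -> R) a b c :
  ex_RInt f a b -> ex_RInt f b c -> RInt f a b + RInt f b c = RInt f a c.
Proof. exact (RInt_Chasles (V := R_CompleteNormedModule) f a b c). Qed.

Lemma RInt_ext_R (f g : R -> R) a b :
  (forall x, Rmin a b < x < Rmax a b -> f x = g x) -> RInt f a b = RInt g a b.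
Proof. exact (RInt_ext f g a b). Qed.

Lemma RInt_derive_R (u du : R -> R) a b :
  (forall x, is_derive u x (du x)) -> (forall x, continuous du x) -> RInt du a b = u b - u a.
Proof.
  intros Hu Hdu. apply (is_RInt_unique (V := R_CompleteNormedModule)).
  apply (is_RInt_derive (V := R_CompleteNormedModule)); auto.
Qed.

Lemma RInt_parts (u du v dv : R -> R) a b :
  (forall x, is_derive u x (du x)) -> (forall x, continuous du x) ->
  (forall x, is_derive v x (dv x)) -> (forall x, continuous dv x) ->
  RInt (fun x => u x * dv x) a b = u b * v b - u a * v a - RInt (fun x => du x * v x) a b.
Proof.
  intros Hu Hdu Hv Hdv.
  assert (Hcu : forall x, continuous u x) by (intros x; exact (is_derive_continuous_R u du x (Hu x))).
  assert (Hcv : forall x, continuous v x) by (intros x; exact (is_derive_continuous_R v dv x (Hv x))).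
  assert (Huv : is_RInt (fun x => du x * v x + u x * dv x) a b (u b * v b - u a * v a)).
  { apply (is_RInt_derive (V := R_CompleteNormedModule) (fun x => u x * v x)).
    - intros x _. apply (is_derive_mult (K := R_AbsRing)); auto. intros; apply Rmult_comm.
    - intros x _. continuity_R. }
  apply (is_RInt_unique (V := R_CompleteNormedModule)) in Huv.
  rewrite RInt_plus_R in Huv by (apply ex_RInt_continuous_R; intros; continuity_R). lra.
Qed.


(** * Oscillatory integrals *)


Lemma continuous_no_root_sign (h : R -> R) a b :
  (forall x, continuous h x) -> (forall c, a < c < b -> h c <> 0) ->
  (forall x, a < x < b -> 0 < h x) \/ (forall x, a < x < b -> h x < 0).
Proof.
  intros Hc Hz.
  assert (Hh : continuity h) by (intros x; apply continuity_pt_filterlim, Hc).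
  destruct (classic (exists p, a < p < b /\ h p < 0)) as [[p [Hp Hpn]]|Hneg].
  - right. intros x Hx. destruct (Rlt_or_le (h x) 0) as [H|H]; [exact H|exfalso].
    assert (Hpos : 0 < h x) by (pose proof (Hz x Hx); lra).
    destruct (Rlt_or_le p x) as [Hpx|Hxp].
    + destruct (IVT h p x Hh Hpx Hpn Hpos) as [z [Hzr Hz0]]. apply (Hz z); [lra|exact Hz0].
    + assert (Hxp' : x < p) by (destruct (Req_dec x p); [subst; lra|lra]).
      destruct (IVT (fun t => - h t) x p (continuity_opp _ Hh) Hxp' ltac:(lra) ltac:(lra))
        as [z [Hzr Hz0]].
      apply (Hz z); lra.
  - left. intros x Hx. pose proof (Hz x Hx).
    destruct (Rlt_or_le (h x) 0); [exfalso; apply Hneg; eauto|lra].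
Qed.

Definition few_roots_on (h : R -> R) (a b : R) (n : nat) : Prop :=
  forall l, NoDup l -> (forall z, In z l -> a < z < b /\ h z = 0) -> (length l <= n)%nat.

Lemma at_most_zeros_few_roots_on h N a b : at_most_zeros h N -> few_roots_on h a b N.
Proof. intros H l Hl Hz. apply H; auto. intros z Hin. apply Hz, Hin. Qed.

Lemma few_roots_on_O h a b c : few_roots_on h a b 0 -> a < c < b -> h c <> 0.
Proof.
  intros H Hc Hc0. assert (H1 : (length (c :: nil) <= 0)%nat); [|simpl in H1; lia].
  apply H. { constructor; [intros []|constructor]. } intros z [<-|[]]; auto.
Qed.

Lemma few_roots_on_split h a b c n : a < c < b -> h c = 0 -> few_roots_on h a b (S n) ->
  few_roots_on h a c n /\ few_roots_on h c b n.
Proof.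
  intros Hc Hc0 H.
  assert (Hcons : forall u v, a <= u -> v <= b -> (v <= c \/ c <= u) -> few_roots_on h u v n).
  { intros u v Hu Hv Huv l Hl Hz. cut (length (c :: l) <= S n)%nat; [simpl; lia|].
    apply H.
    - constructor; auto. intros Hin. destruct (Hz c Hin). lra.
    - intros z [<-|Hin]; [auto|]. destruct (Hz z Hin). split; [lra|auto]. }
  split; apply Hcons; lra.
Qed.

Section TotalVariation.
Variables g dg : R -> R.
Hypothesis g_deriv : forall x, is_derive g x (dg x).
Hypothesis dg_cont : forall x, continuous dg x.

Lemma RInt_abs_derive_monotone a b : a <= b -> (forall c, a < c < b -> dg c <> 0) ->
  RInt (fun x => Rabs (dg x)) a b <= Rabs (g b) + Rabs (g a).
Proof.
  intros Hab Hz. pose proof (Rabs_pos (g a)). pose proof (Rabs_pos (g b)).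
  destruct (Req_dec a b) as [<-|Hab'].
  { rewrite RInt_point. unfold zero; simpl. lra. }
  pose proof (Rle_abs (g a)). pose proof (Rle_abs (g b)).
  pose proof (Rabs_Ropp (g a)). pose proof (Rabs_Ropp (g b)).
  pose proof (Rle_abs (- g a)). pose proof (Rle_abs (- g b)).
  destruct (continuous_no_root_sign dg a b dg_cont Hz) as [Hpos|Hneg].
  - rewrite (RInt_ext _ dg), (RInt_derive_R g dg); [lra|auto|auto|].
    intros x Hx. rewrite Rmin_left, Rmax_right in Hx by lra. apply Rabs_pos_eq, Rlt_le, Hpos, Hx.
  - rewrite (RInt_ext _ (fun x => - dg x)), (RInt_derive_R (fun x => - g x));
      [lra| |intros; continuity_R|].
    + intros x. now apply (is_derive_opp (K := R_AbsRing) (V := R_NormedModule)).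
    + intros x Hx. rewrite Rmin_left, Rmax_right in Hx by lra. apply Rabs_left, Hneg, Hx.
Qed.

Lemma RInt_abs_derive_le n a b M : a <= b -> (forall x, a <= x <= b -> Rabs (g x) <= M) ->
  few_roots_on dg a b n -> RInt (fun x => Rabs (dg x)) a b <= 2 ^ S n * M.
Proof.
  revert a b. induction n as [|n IH]; intros a b Hab HM Hroots;
    assert (HM0 : 0 <= M) by (pose proof (HM a ltac:(lra)); pose proof (Rabs_pos (g a)); lra);
    destruct (classic (exists c, a < c < b /\ dg c = 0)) as [[c [Hc Hc0]]|Hnone].
  - exfalso. exact (few_roots_on_O dg a b c Hroots Hc Hc0).
  - eapply Rle_trans. apply RInt_abs_derive_monotone; eauto.
    pose proof (HM a ltac:(lra)); pose proof (HM b ltac:(lra)). simpl; lra.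
  - destruct (few_roots_on_split dg a b c n Hc Hc0 Hroots) as [Hl Hr].
    rewrite <- (RInt_Chasles_R _ a c b) by (apply ex_RInt_continuous_R; intros; continuity_R).
    pose proof (IH a c ltac:(lra) ltac:(intros; apply HM; lra) Hl).
    pose proof (IH c b ltac:(lra) ltac:(intros; apply HM; lra) Hr).
    simpl in *. lra.
  - eapply Rle_trans. apply RInt_abs_derive_monotone; eauto.
    pose proof (HM a ltac:(lra)); pose proof (HM b ltac:(lra)).
    pose proof (pow_R1_Rle 2 (S n) ltac:(lra)). simpl in *. nra.
Qed.

Definition osc_const (N : nat) : R := 2 + 2 ^ S N.

Lemma RInt_oscillatory_le N (W V : R -> R) B M a b :
  at_most_zeros dg N -> (forall x, is_derive V x (W x)) -> (forall x, continuous W x) ->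
  (forall x, Rabs (V x) <= B) -> a <= b -> (forall x, a <= x <= b -> Rabs (g x) <= M) ->
  Rabs (RInt (fun x => g x * W x) a b) <= osc_const N * M * B.
Proof.
  intros HN HV HW HB Hab HM.
  assert (HM0 : 0 <= M) by (pose proof (HM a ltac:(lra)); pose proof (Rabs_pos (g a)); lra).
  assert (HB0 : 0 <= B) by (pose proof (HB 0); pose proof (Rabs_pos (V 0)); lra).
  assert (Hcg : forall x, continuous g x) by (intros x; exact (is_derive_continuous_R _ _ x (g_deriv x))).
  assert (Hcv : forall x, continuous V x) by (intros x; exact (is_derive_continuous_R _ _ x (HV x))).
  rewrite (RInt_parts g dg V W) by auto.
  assert (Hvar : Rabs (RInt (fun x => dg x * V x) a b) <= B * (2 ^ S N * M)).
  { eapply Rle_trans.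
    { apply abs_RInt_le; [exact Hab|apply ex_RInt_continuous_R; intros; continuity_R]. }
    eapply Rle_trans.
    { apply (RInt_le _ (fun x => B * Rabs (dg x))); auto;
        try (apply ex_RInt_continuous_R; intros; continuity_R).
      intros x _. rewrite Rabs_mult, Rmult_comm.
      apply Rmult_le_compat_r; [apply Rabs_pos|apply HB]. }
    rewrite RInt_scal_R by (apply ex_RInt_continuous_R; intros; continuity_R).
    apply Rmult_le_compat_l; [exact HB0|].
    apply (RInt_abs_derive_le N); auto. now apply at_most_zeros_few_roots_on. }
  assert (Hend : forall x, a <= x <= b -> Rabs (g x * V x) <= M * B).
  { intros x Hx. rewrite Rabs_mult. apply Rmult_le_compat; auto using Rabs_pos. }
  pose proof (Hend a ltac:(lra)) as Ha. pose proof (Hend b ltac:(lra)) as Hb.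
  apply Rabs_le_between in Ha. apply Rabs_le_between in Hb. apply Rabs_le_between in Hvar.
  apply Rabs_le. unfold osc_const. simpl in *. lra.
Qed.

End TotalVariation.

(** * Parametric integrals *)

Lemma continuity_2d_pt_continuous_l h x y : continuity_2d_pt h x y -> continuous (fun t => h t y) x.
Proof.
  intros H. apply filterlim_locally. intros eps. destruct (H eps) as [d Hd].
  exists d. intros t Ht. apply Hd; [exact Ht|]. rewrite Rminus_diag, Rabs_R0. apply cond_pos.
Qed.

Lemma continuity_2d_pt_continuous_r h x y : continuity_2d_pt h x y -> continuous (fun t => h x t) y.
Proof.
  intros H. apply filterlim_locally. intros eps. destruct (H eps) as [d Hd].
  exists d. intros t Ht. apply Hd; [|exact Ht]. rewrite Rminus_diag, Rabs_R0. apply cond_pos.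
Qed.

Lemma continuity_2d_pt_swap h x y : continuity_2d_pt h x y -> continuity_2d_pt (fun u v => h v u) y x.
Proof. intros H eps. destruct (H eps) as [d Hd]. exists d. intros u v Hu Hv. now apply Hd. Qed.

Lemma continuity_2d_pt_of_continuous (h : R -> R -> R) :
  (forall p, continuous (fun q : R * R => h (fst q) (snd q)) p) -> forall x y, continuity_2d_pt h x y.
Proof. intros H x y. apply continuity_2d_pt_filterlim, (H (x, y)). Qed.

Lemma continuity_2d_pt_of_continuous_l (w : R -> R) x y :
  continuous w x -> continuity_2d_pt (fun u _ => w u) x y.
Proof.
  intros H eps. destruct (proj1 (filterlim_locally w (w x)) H eps) as [d Hd].
  exists d. intros u v Hu _. now apply Hd.
Qed.

Lemma continuity_2d_pt_of_continuous_r (w : R -> R) x y :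
  continuous w y -> continuity_2d_pt (fun _ v => w v) x y.
Proof.
  intros H eps. destruct (proj1 (filterlim_locally w (w y)) H eps) as [d Hd].
  exists d. intros u v _ Hv. now apply Hd.
Qed.

Lemma continuity_2d_pt_weighted h (a b : R -> R) x y :
  continuity_2d_pt h x y -> continuous a x -> continuous b y ->
  continuity_2d_pt (fun u v => h u v * a u * b v) x y.
Proof.
  intros Hh Ha Hb. apply continuity_2d_pt_mult; [apply continuity_2d_pt_mult|]; auto.
  - now apply continuity_2d_pt_of_continuous_l.
  - now apply continuity_2d_pt_of_continuous_r.
Qed.

Section ParametricIntegral.
Variable h : R -> R -> R.
Hypothesis h_cont : forall x y, continuity_2d_pt h x y.

Lemma ex_RInt_param a b y : ex_RInt (fun x => h x y) a b.
Proof. apply ex_RInt_continuous_R. intros x. now apply continuity_2d_pt_continuous_l. Qed.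

Lemma RInt_param_continuous a b y0 : continuous (fun y => RInt (fun x => h x y) a b) y0.
Proof.
  apply filterlim_locally. intros eps.
  assert (Hd : 0 < eps / (Rabs (b - a) + 1)).
  { apply Rdiv_lt_0_compat; [apply cond_pos|pose proof (Rabs_pos (b - a)); lra]. }
  destruct (uniform_continuity_2d_1d h (Rmin a b) (Rmax a b) y0 (fun x _ => h_cont x y0)
              (mkposreal _ Hd)) as [d Hunif].
  exists d. intros y Hy. change (Rabs (y - y0) < d) in Hy.
  change (Rabs (RInt (fun x => h x y) a b - RInt (fun x => h x y0) a b) < eps).
  rewrite <- RInt_minus_R by apply ex_RInt_param.
  eapply Rle_lt_trans.
  - apply (norm_RInt_le_const_abs (V := R_NormedModule) (fun x => h x y - h x y0) a b _
             (eps / (Rabs (b - a) + 1))).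
    + intros x Hx.
      assert (Hy' : y0 - d <= y <= y0 + d) by (apply Rlt_le, Rabs_le_between in Hy; lra).
      apply Rlt_le, (Hunif x y0 x y); auto.
      * pose proof (cond_pos d); lra.
      * rewrite Rminus_diag, Rabs_R0. apply cond_pos.
    + apply (RInt_correct (V := R_CompleteNormedModule)).
      apply (ex_RInt_minus (V := R_NormedModule)); apply ex_RInt_param.
  - pose proof (Rabs_pos (b - a)). pose proof (cond_pos eps).
    apply Rmult_lt_reg_r with (Rabs (b - a) + 1); [lra|].
    field_simplify; lra.
Qed.

End ParametricIntegral.

(* Both sides vanish at b = a and have derivative [RInt (fun y => h b y) c d] in b. *)
Lemma RInt_RInt_swap h a b c d : (forall x y, continuity_2d_pt h x y) ->
  RInt (fun y => RInt (fun x => h x y) a b) c d = RInt (fun x => RInt (fun y => h x y) c d) a b.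
Proof.
  intros Hh.
  set (D := fun u => RInt (fun y => h u y) c d).
  assert (HD : forall u, continuous D u).
  { intros u. apply (RInt_param_continuous (fun y x => h x y)).
    intros; now apply continuity_2d_pt_swap. }
  assert (Hinner : forall y u, is_derive (fun u => RInt (fun x => h x y) a u) u (h u y)).
  { intros y u.
    apply (is_derive_RInt (V := R_NormedModule) (fun x => h x y)
             (fun u => RInt (fun x => h x y) a u) a u).
    - exists (mkposreal 1 Rlt_0_1). intros v _.
      apply (RInt_correct (V := R_CompleteNormedModule)), ex_RInt_param, Hh.
    - now apply continuity_2d_pt_continuous_l. }
  assert (HP : forall u, is_derive (fun u => RInt (fun y => RInt (fun x => h x y) a u) c d) u (D u)).
  { intros u.
    replace (D u) with (RInt (fun y => Derive (fun z => RInt (fun x => h x y) a z) u) c d)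
      by (apply RInt_ext; intros; now apply is_derive_unique).
    apply is_derive_RInt_param.
    - exists (mkposreal 1 Rlt_0_1). intros v _ y _. eexists. apply Hinner.
    - intros y _. apply continuity_2d_pt_ext with (f := h); [|apply Hh].
      intros; symmetry; now apply is_derive_unique.
    - exists (mkposreal 1 Rlt_0_1). intros v _.
      apply ex_RInt_continuous_R. intros y. apply (RInt_param_continuous h Hh). }
  rewrite (RInt_derive_R _ D a b HP HD).
  rewrite (RInt_ext (fun y => RInt (fun x => h x y) a a) (fun _ => 0))
    by (intros; rewrite RInt_point; reflexivity).
  rewrite RInt_const. unfold scal; simpl; unfold mult; simpl.
  rewrite Rmult_0_r. symmetry; apply Rminus_0_r.
Qed.


(** * Limits and integrals with inverse-square decay *)

Lemma filterlim_Rplus {T} (F : (T -> Prop) -> Prop) {FF : Filter F} (u v : T -> R) a b :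
  filterlim u F (locally a) -> filterlim v F (locally b) ->
  filterlim (fun t => u t + v t) F (locally (a + b)).
Proof.
  intros Hu Hv. eapply filterlim_comp_2; [exact Hu|exact Hv|].
  exact (filterlim_plus (K := R_AbsRing) (V := R_NormedModule) a b).
Qed.

Lemma filterlim_Rminus {T} (F : (T -> Prop) -> Prop) {FF : Filter F} (u v : T -> R) a b :
  filterlim u F (locally a) -> filterlim v F (locally b) ->
  filterlim (fun t => u t - v t) F (locally (a - b)).
Proof.
  intros Hu Hv. apply (filterlim_Rplus F); [exact Hu|].
  exact (filterlim_comp _ _ _ v opp F (locally b) (locally (opp b)) Hv
           (filterlim_opp (K := R_AbsRing) (V := R_NormedModule) b)).
Qed.

Lemma filterlim_div_p_infty c : filterlim (fun r => c / r) (Rbar_locally p_infty) (locally 0).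
Proof.
  replace 0 with (c * 0) by ring.
  apply (is_lim_scal_l (fun r => / r) c p_infty 0).
  exact (is_lim_inv (fun r => r) p_infty p_infty (is_lim_id p_infty) ltac:(discriminate)).
Qed.

Lemma filterlim_Rabs_sub_le {T} (F : (T -> Prop) -> Prop) {FF : ProperFilter F} (u : T -> R) l c e :
  filterlim u F (locally l) -> F (fun t => Rabs (u t - c) <= e) -> Rabs (l - c) <= e.
Proof.
  intros Hl He. destruct (Rle_or_lt (Rabs (l - c)) e) as [H|H]; [exact H|exfalso].
  assert (Hp : 0 < Rabs (l - c) - e) by lra.
  apply filterlim_locally with (eps := mkposreal _ Hp) in Hl.
  destruct (filter_ex _ (filter_and _ _ Hl He)) as [t [Ht1 Ht2]].
  change (Rabs (u t - l) < Rabs (l - c) - e) in Ht1.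
  pose proof (Rabs_triang (l - u t) (u t - c)). rewrite (Rabs_minus_sym l (u t)) in H0.
  replace (l - u t + (u t - c)) with (l - c) in H0 by ring. lra.
Qed.

Lemma continuous_of_uniform_approx (h : R -> R) (g : R -> R -> R) c :
  (forall n y, 2 <= n -> Rabs (h y - g n y) <= c / n) -> (forall n y, continuous (g n) y) ->
  forall y0, continuous h y0.
Proof.
  intros Happ Hg y0. apply filterlim_locally. intros eps. pose proof (cond_pos eps).
  assert (Hc : 0 <= c).
  { pose proof (Happ 2 y0 ltac:(lra)). pose proof (Rabs_pos (h y0 - g 2 y0)). lra. }
  set (n := 2 + 3 * c / eps).
  assert (Hn : 2 <= n).
  { unfold n. assert (0 <= 3 * c / eps).
    { apply Rmult_le_pos; [lra|apply Rlt_le, Rinv_0_lt_compat; lra]. }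
    lra. }
  assert (Hsmall : c / n < eps / 3).
  { apply Rlt_div_l; [lra|]. unfold n.
    replace (eps / 3 * (2 + 3 * c / eps)) with (2 * eps / 3 + c) by (field; lra). lra. }
  pose proof (proj1 (filterlim_locally _ _) (Hg n y0) (mkposreal (eps / 3) ltac:(lra))) as Hgn.
  eapply filter_imp; [|exact Hgn]. intros y Hy.
  change (Rabs (g n y - g n y0) < eps / 3) in Hy. change (Rabs (h y - h y0) < eps).
  pose proof (Happ n y Hn). pose proof (Happ n y0 Hn).
  rewrite (Rabs_minus_sym (h y0)) in *.
  replace (h y - h y0) with ((h y - g n y) + (g n y - g n y0) + (g n y0 - h y0)) by ring.
  pose proof (Rabs_triang ((h y - g n y) + (g n y - g n y0)) (g n y0 - h y0)).
  pose proof (Rabs_triang (h y - g n y) (g n y - g n y0)). lra.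
Qed.

Lemma is_RInt_inv_sq s t : s <= t -> 0 < s \/ t < 0 -> is_RInt (fun y => / y ^ 2) s t (/ s - / t).
Proof.
  intros Hst Hs.
  assert (Hnz : forall x, Rmin s t <= x <= Rmax s t -> x <> 0).
  { intros x Hx. rewrite Rmin_left, Rmax_right in Hx by lra. lra. }
  replace (/ s - / t) with (minus (- / t) (- / s)) by (unfold minus, plus, opp; simpl; ring).
  apply (is_RInt_derive (V := R_CompleteNormedModule) (fun y => - / y)).
  - intros x Hx. pose proof (Hnz x Hx). auto_derive; [auto|field; auto].
  - intros x Hx. pose proof (Hnz x Hx).
    apply (is_derive_continuous_R _ (fun x => -2 / x ^ 3)). auto_derive; [auto|field; auto].
Qed.

Section InverseSquareDecay.
Variables (h : R -> R) (A : R).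
Hypothesis h_cont : forall y, continuous h y.
Hypothesis h_decay : forall y, 2 <= Rabs y -> Rabs (h y) <= A / y ^ 2.

Lemma inverse_square_const_nonneg : 0 <= A.
Proof.
  pose proof (h_decay 2 ltac:(rewrite Rabs_pos_eq; lra)). pose proof (Rabs_pos (h 2)).
  assert (H4 : 0 <= A / 2 ^ 2) by lra.
  apply Rmult_le_reg_r with (/ 2 ^ 2); [apply Rinv_0_lt_compat; lra|]. unfold Rdiv in H4. lra.
Qed.

Lemma RInt_tail_le_inverse_square s t R :
  2 <= R -> s <= t -> t <= - R \/ R <= s -> Rabs (RInt h s t) <= A / R.
Proof.
  intros HR Hst Hc.
  pose proof inverse_square_const_nonneg as HA.
  assert (HI : is_RInt (fun y => A * / y ^ 2) s t (A * (/ s - / t))).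
  { apply (is_RInt_scal (V := R_NormedModule) (fun y => / y ^ 2)), is_RInt_inv_sq; lra. }
  eapply Rle_trans; [apply abs_RInt_le; [exact Hst|apply ex_RInt_continuous_R; auto]|].
  eapply Rle_trans.
  { apply (RInt_le _ (fun y => A * / y ^ 2)); [exact Hst| |eexists; exact HI|].
    - apply ex_RInt_continuous_R. intros; continuity_R.
    - intros x Hx. apply h_decay.
      destruct Hc; [rewrite Rabs_left|rewrite Rabs_right]; lra. }
  rewrite (is_RInt_unique _ _ _ _ HI). unfold Rdiv. apply Rmult_le_compat_l; [exact HA|].
  destruct Hc.
  - assert (/ s <= 0) by (apply Rlt_le, Rinv_lt_0_compat; lra).
    assert (- / t <= / R) by (rewrite <- Rinv_opp; apply Rinv_le_contravar; lra).
    lra.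
  - assert (0 <= / t) by (apply Rlt_le, Rinv_0_lt_compat; lra).
    assert (/ s <= / R) by (apply Rinv_le_contravar; lra).
    lra.
Qed.

Lemma RInt_tail_inverse_square s t R :
  2 <= R -> (s <= - R /\ t <= - R) \/ (R <= s /\ R <= t) -> Rabs (RInt h s t) <= A / R.
Proof.
  intros HR Hc. destruct (Rle_or_lt s t).
  - apply RInt_tail_le_inverse_square; lra.
  - rewrite <- (opp_RInt_swap (V := R_CompleteNormedModule)) by (apply ex_RInt_continuous_R; auto).
    change (Rabs (- RInt h t s) <= A / R). rewrite Rabs_Ropp.
    apply RInt_tail_le_inverse_square; lra.
Qed.

Lemma RInt_inverse_square_decay_converges :
  exists L, filterlim (fun ab : R * R => RInt h (fst ab) (snd ab))
              (filter_prod (Rbar_locally m_infty) (Rbar_locally p_infty)) (locally L).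
Proof.
  apply (filterlim_locally_cauchy (F := filter_prod (Rbar_locally m_infty) (Rbar_locally p_infty))).
  intros eps. pose proof (cond_pos eps).
  pose proof inverse_square_const_nonneg as HA.
  set (R0 := 2 + 4 * A / eps).
  assert (HR0 : 2 <= R0).
  { unfold R0. assert (0 <= 4 * A / eps).
    { apply Rmult_le_pos; [lra|apply Rlt_le, Rinv_0_lt_compat; lra]. }
    lra. }
  assert (Hsmall : A / R0 < eps / 2).
  { apply Rlt_div_l; [lra|]. unfold R0.
    replace (eps / 2 * (2 + 4 * A / eps)) with (eps + 2 * A) by (field; lra). lra. }
  exists (fun ab => fst ab < - R0 /\ R0 < snd ab). split.
  - apply (Filter_prod _ _ _ (fun a => a < - R0) (fun b => R0 < b)).
    + now exists (- R0).
    + now exists R0.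
    + intros; simpl; auto.
  - intros [a b] [a' b'] [Ha Hb] [Ha' Hb']. simpl in *.
    change (Rabs (RInt h a' b' - RInt h a b) < eps).
    assert (Hex : forall u v, ex_RInt h u v) by (intros; apply ex_RInt_continuous_R; auto).
    rewrite <- (RInt_Chasles_R h a' a b'), <- (RInt_Chasles_R h a b b') by auto.
    pose proof (RInt_tail_inverse_square a' a R0 HR0 ltac:(left; lra)).
    pose proof (RInt_tail_inverse_square b b' R0 HR0 ltac:(right; lra)).
    pose proof (Rabs_triang (RInt h a' a) (RInt h b b')).
    replace (RInt h a' a + (RInt h a b + RInt h b b') - RInt h a b)
      with (RInt h a' a + RInt h b b') by ring.
    lra.
Qed.

End InverseSquareDecay.

Lemma is_RInt_gen_of_RInt (h : R -> R) L : (forall y, continuous h y) ->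
  filterlim (fun ab : R * R => RInt h (fst ab) (snd ab))
    (filter_prod (Rbar_locally m_infty) (Rbar_locally p_infty)) (locally L) ->
  is_RInt_gen h (Rbar_locally m_infty) (Rbar_locally p_infty) L.
Proof.
  intros Hh HL. apply (filterlimi_lim_ext_loc (fun ab => RInt h (fst ab) (snd ab))); [|exact HL].
  apply filter_forall. intros ab.
  apply (RInt_correct (V := R_CompleteNormedModule)), ex_RInt_continuous_R, Hh.
Qed.




Lemma is_RInt_inv_sq_plus n a b : 0 < n ->
  is_RInt (fun y => / (n ^ 2 + y ^ 2)) a b ((atan (b / n) - atan (a / n)) / n).
Proof.
  intros Hn.
  replace ((atan (b / n) - atan (a / n)) / n) with (minus (atan (b / n) / n) (atan (a / n) / n))
    by (unfold minus, plus, opp; simpl; field; lra).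
  apply (is_RInt_derive (V := R_CompleteNormedModule) (fun y => atan (y / n) / n)).
  - intros x _. auto_derive; [lra|field; split; nra].
  - intros x _. apply (is_derive_continuous_R _ (fun x => - (2 * x) / (n ^ 2 + x ^ 2) ^ 2)).
    auto_derive; [nra|field; nra].
Qed.

(** * The partial transform of an admissible function *)

Record weight (w W V : R -> R) (B : R) : Prop := {
  weight_derive : forall x, is_derive W x (w x);
  weight_derive2 : forall x, is_derive V x (W x);
  weight_continuous : forall x, continuous w x;
  weight_le : forall x, Rabs (w x) <= B;
  weight_prim_le : forall x, Rabs (W x) <= B;
  weight_prim2_le : forall x, Rabs (V x) <= B }.

Record admissible (f fx fxx fy : R -> R -> R) (N : nat) (C : R) : Prop := {
  adm_continuous : forall x y, continuity_2d_pt f x y;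
  adm_dx : forall x y, is_derive (fun t => f t y) x (fx x y);
  adm_dx_continuous : forall x y, continuity_2d_pt fx x y;
  adm_dxx : forall x y, is_derive (fun t => fx t y) x (fxx x y);
  adm_dxx_continuous : forall x y, continuous (fun t => fxx t y) x;
  adm_dy : forall x y, is_derive (fun t => f x t) y (fy x y);
  adm_dy_continuous : forall x y, continuous (fun t => fy x t) y;
  adm_dxx_zeros : forall y, at_most_zeros (fun x => fxx x y) N;
  adm_dy_zeros : forall x, at_most_zeros (fun y => fy x y) N;
  adm_decay : forall x y, 1 < norm2 x y -> Rabs (f x y) <= C / norm2 x y;
  adm_dx_decay : forall x y, 1 < norm2 x y -> Rabs (fx x y) <= C / norm2 x y ^ 2 }.

Definition square_RInt (h : R -> R -> R) (m n : R) : R :=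
  RInt (fun y => RInt (fun x => h x y) (- n) n) (- m) m.

Lemma norm2_ge_l x y : Rabs x <= norm2 x y.
Proof. unfold norm2. rewrite <- sqrt_Rsqr_abs. apply sqrt_le_1_alt. unfold Rsqr. nra. Qed.

Lemma norm2_sq x y : norm2 x y ^ 2 = x ^ 2 + y ^ 2.
Proof. unfold norm2. apply pow2_sqrt. nra. Qed.

Lemma norm2_swap x y : norm2 x y = norm2 y x.
Proof. unfold norm2. f_equal. ring. Qed.

Section OscillatoryTransform.
Variables (f fx fxx fy : R -> R -> R) (N : nat) (C B : R).
Variables (w1 W1 V1 w2 W2 V2 : R -> R) (Phi : R -> R).
Hypothesis f_adm : admissible f fx fxx fy N C.
Hypothesis w1_weight : weight w1 W1 V1 B.
Hypothesis w2_weight : weight w2 W2 V2 B.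
Hypothesis Phi_lim : forall y,
  filterlim (fun r => RInt (fun x => f x y * w1 x) (- r) r) (Rbar_locally p_infty) (locally (Phi y)).

Local Notation K := (osc_const N).

Lemma osc_const_pos : 0 < K.
Proof. unfold osc_const. pose proof (pow_lt 2 (S N) ltac:(lra)). lra. Qed.

Lemma weight_const_nonneg : 0 <= B.
Proof. pose proof (weight_le _ _ _ _ w1_weight 0). pose proof (Rabs_pos (w1 0)). lra. Qed.

Lemma adm_const_nonneg : 0 <= C.
Proof.
  pose proof (adm_decay _ _ _ _ _ _ f_adm 2 0).
  assert (H2 : norm2 2 0 = 2).
  { unfold norm2. replace (2 ^ 2 + 0 ^ 2) with (2 * 2) by ring. apply sqrt_square; lra. }
  rewrite H2 in H. specialize (H ltac:(lra)). pose proof (Rabs_pos (f 2 0)).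
  unfold Rdiv in H. lra.
Qed.

Lemma f_continuous_l x y : continuous (fun t => f t y) x.
Proof. apply continuity_2d_pt_continuous_l, (adm_continuous _ _ _ _ _ _ f_adm). Qed.

Lemma f_continuous_r x y : continuous (fun t => f x t) y.
Proof. apply continuity_2d_pt_continuous_r, (adm_continuous _ _ _ _ _ _ f_adm). Qed.

Lemma fx_continuous_l x y : continuous (fun t => fx t y) x.
Proof. apply continuity_2d_pt_continuous_l, (adm_dx_continuous _ _ _ _ _ _ f_adm). Qed.

Lemma w1_continuous x : continuous w1 x.
Proof. apply (weight_continuous _ _ _ _ w1_weight). Qed.

Lemma w2_continuous x : continuous w2 x.
Proof. apply (weight_continuous _ _ _ _ w2_weight). Qed.

Lemma W1_continuous x : continuous W1 x.
Proof. exact (is_derive_continuous_R _ _ x (weight_derive _ _ _ _ w1_weight x)). Qed.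

Lemma W2_continuous x : continuous W2 x.
Proof. exact (is_derive_continuous_R _ _ x (weight_derive _ _ _ _ w2_weight x)). Qed.

Local Hint Resolve f_continuous_l f_continuous_r fx_continuous_l : core.
Local Hint Resolve w1_continuous w2_continuous W1_continuous W2_continuous : core.

Lemma f_le x y : 2 <= Rabs x -> Rabs (f x y) <= C / Rabs x.
Proof.
  intros Hx. pose proof (norm2_ge_l x y). pose proof adm_const_nonneg.
  eapply Rle_trans; [apply (adm_decay _ _ _ _ _ _ f_adm); lra|].
  unfold Rdiv. apply Rmult_le_compat_l; [lra|]. apply Rinv_le_contravar; lra.
Qed.

Lemma fx_le x y m : 2 <= m <= Rabs x -> Rabs (fx x y) <= C / (m ^ 2 + y ^ 2).
Proof.
  intros Hm. pose proof (norm2_ge_l x y). pose proof adm_const_nonneg.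
  eapply Rle_trans; [apply (adm_dx_decay _ _ _ _ _ _ f_adm); lra|].
  rewrite norm2_sq. unfold Rdiv. apply Rmult_le_compat_l; [lra|].
  apply Rinv_le_contravar; [nra|]. rewrite <- (pow2_abs x). nra.
Qed.

Lemma fx_le_r x y : 2 <= Rabs y -> Rabs (fx x y) <= C / y ^ 2.
Proof.
  intros Hy. pose proof (norm2_ge_l y x). rewrite <- norm2_swap in H. pose proof adm_const_nonneg.
  eapply Rle_trans; [apply (adm_dx_decay _ _ _ _ _ _ f_adm); lra|].
  rewrite norm2_sq. unfold Rdiv. apply Rmult_le_compat_l; [lra|].
  apply Rinv_le_contravar; [rewrite <- (pow2_abs y); nra|nra].
Qed.

Definition dx_transform a b y := RInt (fun x => fx x y * W1 x) a b.

Lemma ex_RInt_dx_transform a b y : ex_RInt (fun x => fx x y * W1 x) a b.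
Proof. apply ex_RInt_continuous_R. intros; continuity_R. Qed.

Lemma dx_transform_continuous a b y0 : continuous (dx_transform a b) y0.
Proof.
  apply (RInt_param_continuous (fun x y => fx x y * W1 x)). intros x y.
  apply continuity_2d_pt_mult; [apply (adm_dx_continuous _ _ _ _ _ _ f_adm)|].
  now apply continuity_2d_pt_of_continuous_l.
Qed.

Local Hint Resolve dx_transform_continuous : core.

Lemma partial_transform_by_parts r y :
  RInt (fun x => f x y * w1 x) (- r) r = f r y * W1 r - f (- r) y * W1 (- r) - dx_transform (- r) r y.
Proof.
  apply (RInt_parts (fun t => f t y) (fun t => fx t y) W1 w1); auto.
  - intros x. apply (adm_dx _ _ _ _ _ _ f_adm).
  - apply (weight_derive _ _ _ _ w1_weight).
Qed.

Lemma dx_transform_tail a b y m : a <= b -> 2 <= m -> (forall x, a <= x <= b -> m <= Rabs x) ->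
  Rabs (dx_transform a b y) <= K * (C / (m ^ 2 + y ^ 2)) * B.
Proof.
  intros Hab Hm Hx.
  apply (RInt_oscillatory_le (fun t => fx t y) (fun t => fxx t y) (fun x => adm_dxx _ _ _ _ _ _ f_adm x y)
           (fun x => adm_dxx_continuous _ _ _ _ _ _ f_adm x y) N W1 V1); auto.
  - apply (adm_dxx_zeros _ _ _ _ _ _ f_adm).
  - apply (weight_derive2 _ _ _ _ w1_weight).
  - apply (weight_prim2_le _ _ _ _ w1_weight).
  - intros x Hx'. apply fx_le. split; [lra|auto].
Qed.

Lemma dx_transform_cauchy n r y : 2 <= n <= r ->
  Rabs (dx_transform (- r) r y - dx_transform (- n) n y) <= 2 * (K * (C / (n ^ 2 + y ^ 2)) * B).
Proof.
  intros Hnr. unfold dx_transform.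
  rewrite <- (RInt_Chasles_R _ (- r) (- n) r), <- (RInt_Chasles_R _ (- n) n r)
    by apply ex_RInt_dx_transform.
  replace (RInt (fun x => fx x y * W1 x) (- r) (- n) + (RInt (fun x => fx x y * W1 x) (- n) n +
             RInt (fun x => fx x y * W1 x) n r) - RInt (fun x => fx x y * W1 x) (- n) n)
    with (dx_transform (- r) (- n) y + dx_transform n r y) by (unfold dx_transform; ring).
  pose proof (dx_transform_tail (- r) (- n) y n ltac:(lra) ltac:(lra)
                (fun x Hx => ltac:(rewrite Rabs_left by lra; lra))).
  pose proof (dx_transform_tail n r y n ltac:(lra) ltac:(lra)
                (fun x Hx => ltac:(rewrite Rabs_right by lra; lra))).
  pose proof (Rabs_triang (dx_transform (- r) (- n) y) (dx_transform n r y)). lra.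
Qed.

Lemma boundary_term_vanishes y :
  filterlim (fun r => f r y * W1 r - f (- r) y * W1 (- r)) (Rbar_locally p_infty) (locally 0).
Proof.
  pose proof weight_const_nonneg. pose proof adm_const_nonneg.
  change (filterlim (fun r => f r y * W1 r - f (- r) y * W1 (- r)) (Rbar_locally p_infty)
            (Rbar_locally (Finite 0))).
  apply (filterlim_le_le (fun r => - (2 * C * B) / r) _ (fun r => 2 * C * B / r)).
  - exists 2. intros r Hr.
    assert (Hf : forall s, Rabs s = r -> Rabs (f s y * W1 s) <= C * B / r).
    { intros s Hs. rewrite Rabs_mult. replace (C * B / r) with (C / r * B) by (field; lra).
      apply Rmult_le_compat; try apply Rabs_pos.
      - rewrite <- Hs. apply f_le. lra.
      - apply (weight_prim_le _ _ _ _ w1_weight). }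
    pose proof (Hf r ltac:(apply Rabs_pos_eq; lra)) as H1.
    pose proof (Hf (- r) ltac:(rewrite Rabs_Ropp; apply Rabs_pos_eq; lra)) as H2.
    apply Rabs_le_between in H1, H2.
    replace (- (2 * C * B) / r) with (- (C * B / r) - C * B / r) by (field; lra).
    replace (2 * C * B / r) with (C * B / r + C * B / r) by (field; lra). lra.
  - apply filterlim_div_p_infty.
  - apply filterlim_div_p_infty.
Qed.

Lemma transform_approx n y : 2 <= n ->
  Rabs (Phi y + dx_transform (- n) n y) <= 2 * (K * (C / (n ^ 2 + y ^ 2)) * B).
Proof.
  intros Hn.
  assert (Hlim : filterlim (fun r => - dx_transform (- r) r y) (Rbar_locally p_infty)
                           (locally (Phi y - 0))).
  { eapply filterlim_ext; [|exact (filterlim_Rminus _ _ _ _ _ (Phi_lim y) (boundary_term_vanishes y))].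
    intros r. simpl. rewrite partial_transform_by_parts. ring. }
  rewrite Rminus_0_r in Hlim. rewrite <- (Ropp_involutive (dx_transform (- n) n y)).
  apply (filterlim_Rabs_sub_le _ _ _ _ _ Hlim).
  exists n. intros r Hr. rewrite <- Rabs_Ropp.
  replace (- (- dx_transform (- r) r y - - dx_transform (- n) n y))
    with (dx_transform (- r) r y - dx_transform (- n) n y) by ring.
  apply dx_transform_cauchy. lra.
Qed.

Lemma transform_approx_uniform n y : 2 <= n ->
  Rabs (Phi y - - dx_transform (- n) n y) <= 2 * K * C * B / n.
Proof.
  intros Hn. unfold Rminus. rewrite Ropp_involutive. eapply Rle_trans; [now apply transform_approx|].
  pose proof osc_const_pos. pose proof weight_const_nonneg. pose proof adm_const_nonneg.
  replace (2 * K * C * B / n) with (2 * (K * (C / n) * B)) by (field; lra).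
  apply Rmult_le_compat_l; [lra|]. apply Rmult_le_compat_r; [lra|].
  apply Rmult_le_compat_l; [lra|]. unfold Rdiv. apply Rmult_le_compat_l; [lra|].
  apply Rinv_le_contravar; nra.
Qed.

Lemma transform_continuous y0 : continuous Phi y0.
Proof.
  apply (continuous_of_uniform_approx Phi (fun n y => - dx_transform (- n) n y) (2 * K * C * B)).
  - exact transform_approx_uniform.
  - intros n y. continuity_R.
Qed.

Local Hint Resolve transform_continuous : core.

Lemma transform_decay y : 2 <= Rabs y -> Rabs (Phi y) <= (2 * K + 4) * C * B / y ^ 2.
Proof.
  intros Hy. pose proof osc_const_pos. pose proof weight_const_nonneg. pose proof adm_const_nonneg.
  assert (Hy2 : 4 <= y ^ 2) by (rewrite <- pow2_abs; nra).
  pose proof (transform_approx 2 y ltac:(lra)) as Happ. change (- (2)) with (-2) in Happ.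
  assert (Hd2 : Rabs (dx_transform (- 2) 2 y) <= 4 * (C / y ^ 2 * B)).
  { unfold dx_transform. replace 4 with (2 - - 2) by ring.
    apply abs_RInt_le_const; [lra|apply ex_RInt_dx_transform|].
    intros t Ht. rewrite Rabs_mult.
    apply Rmult_le_compat; try apply Rabs_pos.
    - now apply fx_le_r.
    - apply (weight_prim_le _ _ _ _ w1_weight). }
  assert (Hc : C / (2 ^ 2 + y ^ 2) <= C / y ^ 2).
  { unfold Rdiv. apply Rmult_le_compat_l; [lra|]. apply Rinv_le_contravar; lra. }
  assert (HKB : 2 * (K * (C / (2 ^ 2 + y ^ 2)) * B) <= 2 * K * B * (C / y ^ 2)).
  { replace (2 * (K * (C / (2 ^ 2 + y ^ 2)) * B)) with (2 * K * B * (C / (2 ^ 2 + y ^ 2))) by ring.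
    apply Rmult_le_compat_l; [nra|lra]. }
  assert (Hy0 : y <> 0) by (intros ->; rewrite Rabs_R0 in Hy; lra).
  replace ((2 * K + 4) * C * B / y ^ 2) with (2 * K * B * (C / y ^ 2) + 4 * (C / y ^ 2 * B))
    by (field; exact Hy0).
  replace (Phi y) with ((Phi y + dx_transform (- 2) 2 y) - dx_transform (- 2) 2 y) by ring.
  pose proof (Rabs_triang (Phi y + dx_transform (- 2) 2 y) (- dx_transform (- 2) 2 y)).
  rewrite Rabs_Ropp in H2. unfold Rminus. lra.
Qed.

Lemma outer_integral_converges : exists L,
  filterlim (fun ab : R * R => RInt (fun y => Phi y * w2 y) (fst ab) (snd ab))
    (filter_prod (Rbar_locally m_infty) (Rbar_locally p_infty)) (locally L).
Proof.
  apply (RInt_inverse_square_decay_converges _ ((2 * K + 4) * C * B * B)).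
  - intros; continuity_R.
  - intros y Hy. rewrite Rabs_mult.
    assert (Hy0 : y <> 0) by (intros ->; rewrite Rabs_R0 in Hy; lra).
    replace ((2 * K + 4) * C * B * B / y ^ 2) with ((2 * K + 4) * C * B / y ^ 2 * B)
      by (field; exact Hy0).
    apply Rmult_le_compat; try apply Rabs_pos.
    + now apply transform_decay.
    + apply (weight_le _ _ _ _ w2_weight).
Qed.

Lemma square_RInt_partial_transform m n :
  square_RInt (fun x y => f x y * w1 x * w2 y) m n =
  RInt (fun y => RInt (fun x => f x y * w1 x) (- n) n * w2 y) (- m) m.
Proof.
  unfold square_RInt. apply RInt_ext_R. intros y _.
  rewrite (Rmult_comm _ (w2 y)), <- RInt_scal_R by (apply ex_RInt_continuous_R; intros; continuity_R).
  apply RInt_ext_R. intros x _. ring.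
Qed.

Lemma boundary_RInt_le s m : 2 <= Rabs s -> 0 <= m ->
  Rabs (RInt (fun y => f s y * w2 y) (- m) m) <= K * (C / Rabs s) * B.
Proof.
  intros Hs Hm.
  apply (RInt_oscillatory_le (fun t => f s t) (fun t => fy s t) (fun y => adm_dy _ _ _ _ _ _ f_adm s y)
           (fun y => adm_dy_continuous _ _ _ _ _ _ f_adm s y) N w2 W2); auto.
  - apply (adm_dy_zeros _ _ _ _ _ _ f_adm).
  - apply (weight_derive _ _ _ _ w2_weight).
  - apply (weight_prim_le _ _ _ _ w2_weight).
  - lra.
  - intros y _. now apply f_le.
Qed.

Lemma approx_RInt_le m n : 0 <= m -> 2 <= n ->
  Rabs (RInt (fun y => (Phi y + dx_transform (- n) n y) * w2 y) (- m) m) <= 2 * K * C * B * B * PI / n.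
Proof.
  intros Hm Hn. pose proof osc_const_pos. pose proof weight_const_nonneg. pose proof adm_const_nonneg.
  pose proof PI_RGT_0.
  set (c := 2 * K * C * B * B). assert (Hc : 0 <= c) by (unfold c; repeat apply Rmult_le_pos; lra).
  assert (HI : is_RInt (fun y => c * / (n ^ 2 + y ^ 2)) (- m) m
                 (c * ((atan (m / n) - atan (- m / n)) / n))).
  { apply (is_RInt_scal (V := R_NormedModule) (fun y => / (n ^ 2 + y ^ 2))), is_RInt_inv_sq_plus. lra. }
  eapply Rle_trans; [apply abs_RInt_le; [lra|apply ex_RInt_continuous_R; intros; continuity_R]|].
  eapply Rle_trans.
  { apply (RInt_le _ (fun y => c * / (n ^ 2 + y ^ 2))); [lra| |eexists; exact HI|].
    - apply ex_RInt_continuous_R. intros; continuity_R.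
    - intros y _. rewrite Rabs_mult.
      replace (c * / (n ^ 2 + y ^ 2)) with (2 * (K * (C / (n ^ 2 + y ^ 2)) * B) * B)
        by (unfold c; field; nra).
      apply Rmult_le_compat; try apply Rabs_pos.
      + now apply transform_approx.
      + apply (weight_le _ _ _ _ w2_weight). }
  rewrite (is_RInt_unique _ _ _ _ HI).
  pose proof (atan_bound (m / n)). pose proof (atan_bound (- m / n)).
  unfold Rdiv. rewrite <- Rmult_assoc. apply Rmult_le_compat_r; [apply Rlt_le, Rinv_0_lt_compat; lra|].
  apply Rmult_le_compat_l; lra.
Qed.

Lemma square_RInt_close m n : 0 <= m -> 2 <= n ->
  Rabs (square_RInt (fun x y => f x y * w1 x * w2 y) m n - RInt (fun y => Phi y * w2 y) (- m) m)
    <= 2 * K * C * B * B * (1 + PI) / n.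
Proof.
  intros Hm Hn. pose proof osc_const_pos. pose proof weight_const_nonneg. pose proof adm_const_nonneg.
  rewrite square_RInt_partial_transform.
  (* The two boundary terms of the integration by parts in x, the approximation error, and
     the limit integrand. *)
  rewrite (RInt_ext_R _ (fun y => W1 n * (f n y * w2 y) - W1 (- n) * (f (- n) y * w2 y)
                               - (Phi y + dx_transform (- n) n y) * w2 y + Phi y * w2 y))
    by (intros; rewrite partial_transform_by_parts; ring).
  rewrite RInt_plus_R, !RInt_minus_R, !RInt_scal_R;
    try (apply ex_RInt_continuous_R; intros; continuity_R).
  set (Ip := RInt (fun y => f n y * w2 y) (- m) m).
  set (Im := RInt (fun y => f (- n) y * w2 y) (- m) m).
  pose proof (approx_RInt_le m n Hm Hn).
  set (Ia := RInt (fun y => (Phi y + dx_transform (- n) n y) * w2 y) (- m) m) in *.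
  assert (Hb : forall s, Rabs s = n -> forall I, Rabs I <= K * (C / Rabs s) * B ->
                 Rabs (W1 s * I) <= B * (K * (C / n) * B)).
  { intros s Hs I HI. rewrite Rabs_mult, <- Hs.
    apply Rmult_le_compat; try apply Rabs_pos; [apply (weight_prim_le _ _ _ _ w1_weight)|exact HI]. }
  pose proof (Hb n ltac:(apply Rabs_pos_eq; lra) Ip
                ltac:(apply boundary_RInt_le; rewrite ?Rabs_pos_eq; lra)).
  pose proof (Hb (- n) ltac:(rewrite Rabs_Ropp; apply Rabs_pos_eq; lra) Im
                ltac:(apply boundary_RInt_le; rewrite ?Rabs_Ropp, ?Rabs_pos_eq; lra)).
  replace (W1 n * Ip - W1 (- n) * Im - Ia + RInt (fun y => Phi y * w2 y) (- m) m
             - RInt (fun y => Phi y * w2 y) (- m) m) with (W1 n * Ip + - (W1 (- n) * Im) + - Ia) by ring.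
  replace (2 * K * C * B * B * (1 + PI) / n)
    with (B * (K * (C / n) * B) + B * (K * (C / n) * B) + 2 * K * C * B * B * PI / n) by (field; lra).
  pose proof (Rabs_triang (W1 n * Ip + - (W1 (- n) * Im)) (- Ia)).
  pose proof (Rabs_triang (W1 n * Ip) (- (W1 (- n) * Im))).
  rewrite !Rabs_Ropp in *. lra.
Qed.

Lemma transform_double_limit : exists L,
  is_RInt_gen (fun y => Phi y * w2 y) (Rbar_locally m_infty) (Rbar_locally p_infty) L /\
  filterlim (fun mn : R * R => square_RInt (fun x y => f x y * w1 x * w2 y) (fst mn) (snd mn))
    (filter_prod (Rbar_locally p_infty) (Rbar_locally p_infty)) (locally L).
Proof.
  destruct outer_integral_converges as [L HL]. exists L. split.
  { apply is_RInt_gen_of_RInt; [intros; continuity_R|exact HL]. }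
  set (S := fun m => RInt (fun y => Phi y * w2 y) (- m) m).
  set (c := 2 * K * C * B * B * (1 + PI)).
  assert (HS : filterlim (fun mn : R * R => S (fst mn))
                 (filter_prod (Rbar_locally p_infty) (Rbar_locally p_infty)) (locally L)).
  { apply (filterlim_comp _ _ _ fst S _ (Rbar_locally p_infty)); [apply filterlim_fst|].
    apply (filterlim_comp _ _ _ (fun m => (- m, m))
             (fun ab : R * R => RInt (fun y => Phi y * w2 y) (fst ab) (snd ab)) _
             (filter_prod (Rbar_locally m_infty) (Rbar_locally p_infty))); [|exact HL].
    apply filterlim_pair; [|apply filterlim_id].
    apply (is_lim_opp (fun m => m) p_infty p_infty), is_lim_id. }
  assert (Hclose : filterlim (fun mn : R * R =>
      square_RInt (fun x y => f x y * w1 x * w2 y) (fst mn) (snd mn) - S (fst mn))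
                 (filter_prod (Rbar_locally p_infty) (Rbar_locally p_infty)) (Rbar_locally (Finite 0))).
  { apply (filterlim_le_le (fun mn => - c / snd mn) _ (fun mn => c / snd mn)).
    - apply (Filter_prod _ _ _ (fun m => 0 < m) (fun n => 2 < n)); [now exists 0|now exists 2|].
      intros m n Hm Hn. simpl.
      assert (H := square_RInt_close m n ltac:(lra) ltac:(lra)). apply Rabs_le_between in H.
      unfold c, S, Rdiv in *. lra.
    - eapply filterlim_comp; [apply filterlim_snd|apply filterlim_div_p_infty].
    - eapply filterlim_comp; [apply filterlim_snd|apply filterlim_div_p_infty]. }
  rewrite <- (Rplus_0_l L).
  eapply filterlim_ext; [|exact (filterlim_Rplus _ _ _ _ _ Hclose HS)]. intros mn. simpl. ring.
Qed.

End OscillatoryTransform.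

(** * Normal functions and trigonometric weights *)

Lemma Ck_swap n : forall f, Ck n f -> Ck n (fun x y => f y x).
Proof.
  induction n as [|n IH]; simpl; intros f Hf.
  - intros [x y]. apply (continuity_2d_pt_filterlim (fun u v => f v u)).
    apply continuity_2d_pt_swap, continuity_2d_pt_of_continuous, Hf.
  - destruct Hf as (Hd & H0 & Hx & Hy). split; [|split; [|split]].
    + intros x y. exact (conj (proj2 (Hd y x)) (proj1 (Hd y x))).
    + now apply IH.
    + (* [dx] of the transpose is convertible to the transpose of [dy f]. *)
      exact (IH _ Hy).
    + exact (IH _ Hx).
Qed.

Lemma smooth2_swap f : smooth2 f -> smooth2 (fun x y => f y x).
Proof. intros Hs n. exact (Ck_swap n f (Hs n)). Qed.

Lemma very_moderate_decrease_swap g :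
  very_moderate_decrease g -> very_moderate_decrease (fun x y => g y x).
Proof. intros (C & HC & Hg). exists C. split; [exact HC|]. intros x y. rewrite norm2_swap. apply Hg. Qed.

Lemma moderate_decrease_swap g : moderate_decrease g -> moderate_decrease (fun x y => g y x).
Proof. intros (C & HC & Hg). exists C. split; [exact HC|]. intros x y. rewrite norm2_swap. apply Hg. Qed.

Lemma normal_swap f : normal f -> normal (fun x y => f y x).
Proof.
  intros (Hx & Hy & H0 & Hdx & Hdy & N & HNx & HNy).
  split; [exact Hy|]. split; [exact Hx|]. split; [now apply very_moderate_decrease_swap|].
  split; [exact (moderate_decrease_swap _ Hdy)|]. split; [exact (moderate_decrease_swap _ Hdx)|].
  exists N. split; [exact HNy|exact HNx].
Qed.

Lemma admissible_of_normal f : smooth2 f -> normal f ->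
  exists N C, admissible f (dx f) (dx (dx f)) (dy f) N C.
Proof.
  intros Hs (_ & _ & (C0 & HC0 & H0) & (C1 & HC1 & H1) & _ & N & HNx & HNy).
  destruct (Hs 2%nat) as (Hd & (_ & Hc & Hcx & Hcy) & (Hdx & (_ & Hcxx & _)) & _).
  exists N, (C0 + C1). split.
  - now apply continuity_2d_pt_of_continuous.
  - intros x y. apply Derive_correct, (proj1 (Hd x y)).
  - now apply continuity_2d_pt_of_continuous.
  - intros x y. apply Derive_correct, (proj1 (Hdx x y)).
  - intros x y. now apply continuity_2d_pt_continuous_l, continuity_2d_pt_of_continuous.
  - intros x y. apply Derive_correct, (proj2 (Hd x y)).
  - intros x y. now apply continuity_2d_pt_continuous_r, continuity_2d_pt_of_continuous.
  - intros y. exact (proj2 (proj2 (HNy y))).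
  - intros x. exact (proj1 (proj2 (HNx x))).
  - intros x y Hxy. eapply Rle_trans; [now apply H0|].
    unfold Rdiv. apply Rmult_le_compat_r; [apply Rlt_le, Rinv_0_lt_compat|]; lra.
  - intros x y Hxy. eapply Rle_trans; [now apply H1|].
    unfold Rdiv. apply Rmult_le_compat_r; [apply Rlt_le, Rinv_0_lt_compat|]; nra.
Qed.

(* [cexpi (- (k * x))] is the pair [(wave k true x, wave k false x)]; [Cpart] below selects
   the real ([true]) or imaginary ([false]) part accordingly. *)
Definition wave (k : R) (b : bool) (x : R) : R :=
  if b then cos (- (k * x)) else sin (- (k * x)).

Definition wave_prim (k : R) (b : bool) (x : R) : R :=
  if b then - sin (- (k * x)) / k else cos (- (k * x)) / k.

Definition wave_prim2 (k : R) (b : bool) (x : R) : R :=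
  if b then - cos (- (k * x)) / (k * k) else - sin (- (k * x)) / (k * k).

Definition wave_const (k : R) : R := 1 + / Rabs k + / Rabs (k * k).

Lemma wave_const_pos k : k <> 0 -> 0 < wave_const k.
Proof.
  intros Hk. unfold wave_const.
  pose proof (Rinv_0_lt_compat _ (Rabs_pos_lt k Hk)).
  pose proof (Rinv_0_lt_compat _ (Rabs_pos_lt (k * k) (Rmult_integral_contrapositive _ _ (conj Hk Hk)))).
  lra.
Qed.

Lemma wave_continuous k b x : continuous (wave k b) x.
Proof.
  destruct b; unfold wave.
  - apply (is_derive_continuous_R _ (fun x => k * sin (- (k * x)))). auto_derive; [auto|ring].
  - apply (is_derive_continuous_R _ (fun x => - k * cos (- (k * x)))). auto_derive; [auto|ring].
Qed.

Lemma Rabs_div_le_inv u d : d <> 0 -> Rabs u <= 1 -> Rabs (u / d) <= / Rabs d.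
Proof.
  intros Hd Hu. rewrite Rabs_div by exact Hd. unfold Rdiv.
  rewrite <- (Rmult_1_l (/ Rabs d)) at 2.
  apply Rmult_le_compat_r; [apply Rlt_le, Rinv_0_lt_compat, Rabs_pos_lt, Hd|exact Hu].
Qed.

Lemma wave_weight k b B : k <> 0 -> wave_const k <= B ->
  weight (wave k b) (wave_prim k b) (wave_prim2 k b) B.
Proof.
  intros Hk HB.
  assert (Hkk : k * k <> 0) by (apply Rmult_integral_contrapositive; auto).
  pose proof (Rlt_le _ _ (Rinv_0_lt_compat _ (Rabs_pos_lt k Hk))).
  pose proof (Rlt_le _ _ (Rinv_0_lt_compat _ (Rabs_pos_lt _ Hkk))).
  assert (Hcos : forall x, Rabs (cos x) <= 1) by (intros; apply Rabs_le, COS_bound).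
  assert (Hsin : forall x, Rabs (sin x) <= 1) by (intros; apply Rabs_le, SIN_bound).
  unfold wave_const in HB.
  split; intros x.
  - destruct b; unfold wave, wave_prim; auto_derive; auto; field; auto.
  - destruct b; unfold wave_prim, wave_prim2; auto_derive; auto; field; auto.
  - apply wave_continuous.
  - destruct b; unfold wave; [pose proof (Hcos (- (k * x)))|pose proof (Hsin (- (k * x)))]; lra.
  - destruct b; unfold wave_prim.
    + pose proof (Rabs_div_le_inv (- sin (- (k * x))) k Hk ltac:(rewrite Rabs_Ropp; apply Hsin)); lra.
    + pose proof (Rabs_div_le_inv (cos (- (k * x))) k Hk (Hcos _)); lra.
  - destruct b; unfold wave_prim2.
    + pose proof (Rabs_div_le_inv (- cos (- (k * x))) (k * k) Hkk
                    ltac:(rewrite Rabs_Ropp; apply Hcos)); lra.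
    + pose proof (Rabs_div_le_inv (- sin (- (k * x))) (k * k) Hkk
                    ltac:(rewrite Rabs_Ropp; apply Hsin)); lra.
Qed.

Lemma square_RInt_swap h m n : (forall x y, continuity_2d_pt h x y) ->
  square_RInt (fun x y => h y x) m n = square_RInt h n m.
Proof.
  intros Hh. apply (RInt_RInt_swap (fun x y => h y x)).
  intros x y. now apply continuity_2d_pt_swap.
Qed.

Lemma square_RInt_plus h1 h2 m n :
  (forall x y, continuity_2d_pt h1 x y) -> (forall x y, continuity_2d_pt h2 x y) ->
  square_RInt (fun x y => h1 x y + h2 x y) m n = square_RInt h1 m n + square_RInt h2 m n.
Proof.
  intros H1 H2. unfold square_RInt.
  rewrite <- RInt_plus_R by (apply ex_RInt_continuous_R; intros; now apply RInt_param_continuous).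
  apply RInt_ext_R. intros y _. apply RInt_plus_R; now apply ex_RInt_param.
Qed.

Lemma square_RInt_minus h1 h2 m n :
  (forall x y, continuity_2d_pt h1 x y) -> (forall x y, continuity_2d_pt h2 x y) ->
  square_RInt (fun x y => h1 x y - h2 x y) m n = square_RInt h1 m n - square_RInt h2 m n.
Proof.
  intros H1 H2. unfold square_RInt.
  rewrite <- RInt_minus_R by (apply ex_RInt_continuous_R; intros; now apply RInt_param_continuous).
  apply RInt_ext_R. intros y _. apply RInt_minus_R; now apply ex_RInt_param.
Qed.

Lemma filterlim_prod_swap {T U} (g : T -> T -> U) (F : (T -> Prop) -> Prop) (G : (U -> Prop) -> Prop) :
  filterlim (fun mn : T * T => g (snd mn) (fst mn)) (filter_prod F F) G ->
  filterlim (fun mn : T * T => g (fst mn) (snd mn)) (filter_prod F F) G.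
Proof.
  intros H P HP. destruct (H P HP) as [Q R HQ HR HQR].
  apply (Filter_prod _ _ _ R Q); auto. intros x y Hx Hy. exact (HQR y x Hy Hx).
Qed.

Lemma normal_wave_transform f k1 k2 a b (Phi Psi : R -> R) :
  smooth2 f -> normal f -> k1 <> 0 -> k2 <> 0 ->
  (forall y, filterlim (fun r => RInt (fun x => f x y * wave k1 a x) (- r) r)
               (Rbar_locally p_infty) (locally (Phi y))) ->
  (forall x, filterlim (fun r => RInt (fun y => f x y * wave k2 b y) (- r) r)
               (Rbar_locally p_infty) (locally (Psi x))) ->
  exists L,
    is_RInt_gen (fun y => Phi y * wave k2 b y) (Rbar_locally m_infty) (Rbar_locally p_infty) L /\
    is_RInt_gen (fun x => Psi x * wave k1 a x) (Rbar_locally m_infty) (Rbar_locally p_infty) L /\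
    filterlim (fun mn : R * R =>
                 square_RInt (fun x y => f x y * wave k1 a x * wave k2 b y) (fst mn) (snd mn))
              (filter_prod (Rbar_locally p_infty) (Rbar_locally p_infty)) (locally L).
Proof.
  intros Hs Hn Hk1 Hk2 HPhi HPsi.
  set (B := wave_const k1 + wave_const k2).
  pose proof (wave_const_pos k1 Hk1). pose proof (wave_const_pos k2 Hk2).
  assert (HB1 : wave_const k1 <= B) by (unfold B; lra).
  assert (HB2 : wave_const k2 <= B) by (unfold B; lra).
  destruct (admissible_of_normal f Hs Hn) as (N & C & Hf).
  destruct (admissible_of_normal _ (smooth2_swap f Hs) (normal_swap f Hn)) as (N' & C' & Hf').
  destruct (transform_double_limit _ _ _ _ _ _ _ _ _ _ _ _ _ _ Hf
              (wave_weight k1 a B Hk1 HB1) (wave_weight k2 b B Hk2 HB2) HPhi) as (L & HL & HLsq).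
  destruct (transform_double_limit _ _ _ _ _ _ _ _ _ _ _ _ _ _ Hf'
              (wave_weight k2 b B Hk2 HB2) (wave_weight k1 a B Hk1 HB1) HPsi) as (L' & HL' & HLsq').
  (* By Fubini the square integrals of the transpose are those of f with the sides exchanged. *)
  assert (Hswap : filterlim (fun mn : R * R =>
      square_RInt (fun x y => f x y * wave k1 a x * wave k2 b y) (snd mn) (fst mn))
      (filter_prod (Rbar_locally p_infty) (Rbar_locally p_infty)) (locally L')).
  { eapply filterlim_ext; [|exact HLsq']. intros [m n]. simpl.
    rewrite <- (square_RInt_swap (fun x y => f x y * wave k1 a x * wave k2 b y)).
    - apply RInt_ext_R. intros y _. apply RInt_ext_R. intros x _. ring.
    - intros x y. apply continuity_2d_pt_weighted; auto using wave_continuous.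
      apply (adm_continuous _ _ _ _ _ _ Hf). }
  assert (HLL : L' = L) by exact (filterlim_locally_unique _ _ _ (filterlim_prod_swap _ _ _ Hswap) HLsq).
  subst L'. exists L. auto.
Qed.

Definition Cpart (b : bool) (z : C) : R := if b then Re z else Im z.

Lemma filterlim_Cpart {T} (F : (T -> Prop) -> Prop) {FF : Filter F} (u : T -> C) z b :
  filterlim u F (locally z) -> filterlim (fun t => Cpart b (u t)) F (locally (Cpart b z)).
Proof.
  intros H. apply filterlim_locally. intros eps.
  eapply filter_imp; [|exact (proj1 (filterlim_locally u z) H eps)].
  intros t [Hre Him]. destruct b; assumption.
Qed.

Lemma filterlim_C_parts {T} (F : (T -> Prop) -> Prop) {FF : Filter F} (u : T -> C) a b :
  filterlim (fun t => Re (u t)) F (locally a) -> filterlim (fun t => Im (u t)) F (locally b) ->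
  filterlim u F (locally ((a, b) : C)).
Proof.
  intros Ha Hb. apply filterlim_locally. intros eps.
  eapply filter_imp; [|exact (filter_and _ _ (proj1 (filterlim_locally _ a) Ha eps)
                                             (proj1 (filterlim_locally _ b) Hb eps))].
  intros t [Hre Him]. split; assumption.
Qed.

Lemma filterlim_RInt_C_wave (h : R -> R) k z b :
  filterlim (fun r => RInt_C (fun x => (RtoC (h x) * cexpi (- (k * x)))%C) (- r) r)
    (Rbar_locally p_infty) (locally z) ->
  filterlim (fun r => RInt (fun x => h x * wave k b x) (- r) r)
    (Rbar_locally p_infty) (locally (Cpart b z)).
Proof.
  intros H. eapply filterlim_ext; [|exact (filterlim_Cpart _ _ _ b H)]. intros r.
  destruct b; apply RInt_ext_R; intros x _; unfold wave, cexpi; simpl; ring.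
Qed.

Lemma is_RInt_gen_C_mul_cexpi (u : R -> C) k (M : bool -> bool -> R) :
  (forall a b, is_RInt_gen (fun y => Cpart a (u y) * wave k b y)
                 (Rbar_locally m_infty) (Rbar_locally p_infty) (M a b)) ->
  is_RInt_gen_C (fun y => (u y * cexpi (- (k * y)))%C)
    (M true true - M false false, M true false + M false true).
Proof.
  intros H. split.
  - eapply is_RInt_gen_ext; [|exact (is_RInt_gen_minus _ _ _ _ (H true true) (H false false))].
    apply filter_forall. intros ab y _. unfold Cpart, wave, cexpi, Re, Im. simpl.
    unfold minus, plus, opp. simpl. ring.
  - eapply is_RInt_gen_ext; [|exact (is_RInt_gen_plus _ _ _ _ (H true false) (H false true))].
    apply filter_forall. intros ab y _. unfold Cpart, wave, cexpi, Re, Im. simpl.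
    unfold plus. simpl. ring.
Qed.

Lemma filterlim_square_RInt_C {T} (F : (T -> Prop) -> Prop) {FF : Filter F} (m n : T -> R)
  f k1 k2 (L : bool -> bool -> R) :
  (forall x y, continuity_2d_pt f x y) ->
  (forall a b, filterlim (fun t => square_RInt (fun x y => f x y * wave k1 a x * wave k2 b y) (m t) (n t))
                 F (locally (L a b))) ->
  filterlim (fun t => RInt_C (fun y =>
               RInt_C (fun x => (RtoC (f x y) * cexpi (- (k1 * x)) * cexpi (- (k2 * y)))%C)
                      (- n t) (n t)) (- m t) (m t))
    F (locally ((L true true - L false false, L true false + L false true) : C)).
Proof.
  intros Hf HL.
  assert (Hcont : forall a b x y, continuity_2d_pt (fun x y => f x y * wave k1 a x * wave k2 b y) x y).
  { intros. apply continuity_2d_pt_weighted; auto using wave_continuous. }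
  apply (filterlim_C_parts F).
  - eapply filterlim_ext; [|exact (filterlim_Rminus _ _ _ _ _ (HL true true) (HL false false))].
    intros t. cbv beta. rewrite <- square_RInt_minus by auto.
    apply RInt_ext_R. intros y _. apply RInt_ext_R. intros x _. unfold wave, cexpi. simpl. ring.
  - eapply filterlim_ext; [|exact (filterlim_Rplus _ _ _ _ _ (HL true false) (HL false true))].
    intros t. cbv beta. rewrite <- square_RInt_plus by auto.
    apply RInt_ext_R. intros y _. apply RInt_ext_R. intros x _. unfold wave, cexpi. simpl. ring.
Qed.

Lemma bool2_choice (P : bool -> bool -> R -> Prop) :
  (forall a b, exists l, P a b l) -> exists L : bool -> bool -> R, forall a b, P a b (L a b).
Proof.
  intros H.
  destruct (H true true) as [l1 H1], (H true false) as [l2 H2].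
  destruct (H false true) as [l3 H3], (H false false) as [l4 H4].
  exists (fun a b : bool => if a then (if b then l1 else l2) else (if b then l3 else l4)).
  intros [|] [|]; assumption.
Qed.

Theorem lemma12 (f : R -> R -> R) (Hs : smooth2 f) (Hn : normal f)
  (k1 k2 : R) (Hk1 : k1 <> 0) (Hk2 : k2 <> 0)
  (F1 : R -> C)
  (HF1 : forall y, filterlim (fun r => RInt_C (fun x => (RtoC (f x y) * cexpi (- (k1 * x)))%C) (- r) r)
                     (Rbar_locally p_infty) (locally (F1 y)))
  (G2 : R -> C)
  (HG2 : forall x, filterlim (fun r => RInt_C (fun y => (RtoC (f x y) * cexpi (- (k2 * y)))%C) (- r) r)
                     (Rbar_locally p_infty) (locally (G2 x))) :
  exists L : C,
    is_RInt_gen_C (fun y => (F1 y * cexpi (- (k2 * y)))%C) L /\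
    is_RInt_gen_C (fun x => (G2 x * cexpi (- (k1 * x)))%C) L /\
    filterlim (fun mn : R * R =>
                 RInt_C (fun y =>
                   RInt_C (fun x => (RtoC (f x y) * cexpi (- (k1 * x)) * cexpi (- (k2 * y)))%C)
                          (- snd mn) (snd mn))
                 (- fst mn) (fst mn))
              (filter_prod (Rbar_locally p_infty) (Rbar_locally p_infty)) (locally L).
Proof.
  destruct (bool2_choice (fun a b l =>
      is_RInt_gen (fun y => Cpart a (F1 y) * wave k2 b y)
        (Rbar_locally m_infty) (Rbar_locally p_infty) l /\
      is_RInt_gen (fun x => Cpart b (G2 x) * wave k1 a x)
        (Rbar_locally m_infty) (Rbar_locally p_infty) l /\
      filterlim (fun mn : R * R =>
                   square_RInt (fun x y => f x y * wave k1 a x * wave k2 b y) (fst mn) (snd mn))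
                (filter_prod (Rbar_locally p_infty) (Rbar_locally p_infty)) (locally l)))
    as [L HL].
  { intros a b. apply normal_wave_transform; auto; intros; now apply filterlim_RInt_C_wave. }
  exists (L true true - L false false, L true false + L false true).
  split; [|split].
  - apply is_RInt_gen_C_mul_cexpi. intros a b. exact (proj1 (HL a b)).
  - rewrite (Rplus_comm (L true false)).
    apply (is_RInt_gen_C_mul_cexpi G2 k1 (fun b a => L a b)). intros b a. exact (proj1 (proj2 (HL a b))).
  - apply (filterlim_square_RInt_C _ fst snd); [|intros a b; exact (proj2 (proj2 (HL a b)))].
    apply continuity_2d_pt_of_continuous, (Hs 0%nat).
Qed.
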